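(* Let $\Gamma$ be a partition of $[n]$ into $k$ nonempty sets, $n_{\min}:=\min_{S\in\Gamma}|S|$, $n_{\max}:=\max_{S\in\Gamma}|S|$, let $p\in(0,1]$, and let $W\subseteq[n]$ be random, containing each index independently with probability $p$; for $S\in\Gamma$ put $S':=S\cap W$. Fix $S,T\in\Gamma$ with $S\ne T$, let $\epsilon\in(0,1)$, and suppose $pn_{\min}\ge\frac{104}3\big(\frac{n_{\max}}{n_{\min}}\big)^2\log\frac6\epsilon$. Then with probability at least $1-\epsilon$, \[\Big|p\Big(\frac1{|S'|}+\frac1{|T'|}\Big)-\Big(\frac1{|S|}+\frac1{|T|}\Big)\Big|<\sqrt{\frac{104}3\cdot\frac{\log(6/\epsilon)}{pn_{\min}^3}}.\]
   Context: Logarithms are natural. *)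

From HB Require Import structures.
From mathcomp Require Import all_boot all_order all_algebra.
From mathcomp Require Import all_classical all_reals exp.
Set Implicit Arguments. Unset Strict Implicit. Unset Printing Implicit Defensive.
Import Order.TTheory GRing.Theory Num.Theory.
Local Open Scope ring_scope.

Definition binom_prob (R : realType) (n : nat) (p : R)
  (E : {set 'I_n} -> bool) : R :=
  \sum_(W : {set 'I_n} | E W) p ^+ #|W| * (1 - p) ^+ (n - #|W|).

Definition nmin (n : nat) (Gamma : {set {set 'I_n}}) : nat :=
  \big[minn/n]_(S in Gamma) #|S|.

Definition nmax (n : nat) (Gamma : {set {set 'I_n}}) : nat :=
  \max_(S in Gamma) #|S|.

Definition lemma12_event (R : realType) (n : nat) (p bound : R)
  (S T W : {set 'I_n}) : bool :=
  [&& S :&: W != finset.set0, T :&: W != finset.set0 &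
   `| p * ((#|S :&: W|%:R)^-1 + (#|T :&: W|%:R)^-1)
      - ((#|S|%:R)^-1 + (#|T|%:R)^-1) | < bound].

(* For a block A, |A ∩ W| is binomial with mean p|A|.  Chernoff's bound with
   exponential moments c = u and c = -7/6 u shows that |A ∩ W| leaves the window
   ((1 - 7/4 u) p|A|, (1 + 5/2 u) p|A|) with probability at most
   2 exp(-u^2 p|A|), and inside this window |p/|A ∩ W| - 1/|A|| < 5/2 u/|A|
   as soon as u <= 6/35.  Choosing u^2 = ln(6/eps)/(p n_min) makes each of the
   four tails (two for S, two for T) at most eps/6; the hypothesis on p n_min
   gives u^2 <= 3/104, hence u <= 6/35, and 5 <= sqrt(104/3) turns the
   deviation 5u/n_min into the stated bound. *)

From HB Require Import structures.
From mathcomp Require Import all_boot all_order all_algebra.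
From mathcomp Require Import all_classical all_reals exp.
From mathcomp Require Import sequences ring lra.
Set Implicit Arguments.
Unset Strict Implicit.
Unset Printing Implicit Defensive.

Import Order.TTheory GRing.Theory Num.Theory.
Local Open Scope ring_scope.

Lemma sum_set_prod (T : finType) (R : comPzSemiRingType) (h : T -> bool -> R) :
  \sum_(W : {set T}) \prod_i h i (i \in W) = \prod_i (h i true + h i false).
Proof.
transitivity (\prod_i \sum_(b : bool) h i b).
  2: by apply: eq_bigr => i _; rewrite big_bool.
rewrite bigA_distr_bigA (reindex (fun f : {ffun T -> bool} => [set i | f i])) /=.
  by apply: eq_bigr => f _; apply: eq_bigr => i _; rewrite inE.
exists (fun W : {set T} => [ffun i => i \in W]) => [f _|W _].
  by apply/ffunP => i; rewrite ffunE inE.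
by apply/setP => i; rewrite inE ffunE.
Qed.

Section ExpBounds.
Variable R : realType.

Lemma expR_le_taylor2 (u : R) : 0 <= u -> u <= 1/3 -> expR u <= 1 + u + 3/2 * u ^+ 2.
Proof.
move=> u_ge0 u_le; have u1 : 0 < 1 - u by lra.
apply: (@le_trans _ _ (1 - u)^-1).
  by rewrite -[expR u]invrK -expRN lef_pV2 ?posrE ?expR_gt0 ?expR_ge1Dx.
by rewrite -(ler_pM2l u1) mulfV ?gt_eqF //; nra.
Qed.

Lemma expRN_le_taylor2 (t : R) : 0 <= t -> expR (- t) <= 1 - t + 3/4 * t ^+ 2.
Proof.
move=> t_ge0; have ht : 0 < (1 + t / 2) ^+ 2 by rewrite exprn_gt0 //; lra.
apply: (@le_trans _ _ ((1 + t / 2) ^+ 2)^-1).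
  rewrite expRN lef_pV2 ?posrE ?expR_gt0 //.
  have -> : expR t = expR (t / 2) ^+ 2 by rewrite -expRM_natl; congr expR; field.
  by rewrite lerXn2r ?nnegrE ?expR_ge0 ?expR_ge1Dx //; lra.
by rewrite -(ler_pM2l ht) mulfV ?gt_eqF //; nra.
Qed.

End ExpBounds.

Section RandomSubset.
Variables (R : realType) (n : nat) (p : R).

Definition binom_weight (W : {set 'I_n}) : R := p ^+ #|W| * (1 - p) ^+ (n - #|W|).

Lemma binom_weightE W : binom_weight W = \prod_i (if i \in W then p else 1 - p).
Proof.
rewrite (bigID (mem W)) /= (eq_bigr (fun _ => p)); last by move=> i ->.
rewrite [X in _ * X](eq_bigr (fun _ => 1 - p)); last by move=> i /negbTE ->.
rewrite !prodr_const; congr (_ * _ ^+ _).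
have -> : #|[pred i | i \notin W]| = #|~: W| by apply: eq_card => i; rewrite !inE.
by rewrite -[in RHS](addKn #|W| #|~: W|) cardsC card_ord.
Qed.

Lemma binom_mgf (A : {set 'I_n}) c :
  \sum_W binom_weight W * expR (c * #|A :&: W|%:R) = (1 - p + p * expR c) ^+ #|A|.
Proof.
pose h i (b : bool) := if b then p * (if i \in A then expR c else 1) else 1 - p.
transitivity (\sum_(W : {set 'I_n}) \prod_i h i (i \in W)).
  apply: eq_bigr => W _; rewrite binom_weightE mulrC expRM_natr -prodr_const.
  rewrite (big_mkcond (fun i => i \in A :&: W)) -big_split /=.
  apply: eq_bigr => i _; rewrite inE /h.
  by case: (i \in W); case: (i \in A) => /=; rewrite ?mul1r ?mulr1 // mulrC.
rewrite sum_set_prod -prodr_const (big_mkcond (fun i => i \in A)).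
apply: eq_bigr => i _; rewrite /h; case: (i \in A); first by rewrite addrC.
by rewrite mulr1 addrC subrK.
Qed.

Lemma sum_binom_weight : \sum_W binom_weight W = 1.
Proof.
have := binom_mgf finset.set0 0; rewrite cards0 expr0 => <-.
by apply: eq_bigr => W _; rewrite mul0r expR0 mulr1.
Qed.

Lemma binom_probC (E : {set 'I_n} -> bool) :
  binom_prob p E = 1 - binom_prob p (fun W => ~~ E W).
Proof. by rewrite -sum_binom_weight (bigID E) /= addrK. Qed.

Hypotheses (p_ge0 : 0 <= p) (p_le1 : p <= 1).

Lemma binom_weight_ge0 W : 0 <= binom_weight W.
Proof. by rewrite mulr_ge0 ?exprn_ge0 ?subr_ge0. Qed.

Lemma le_binom_prob (E1 E2 : {set 'I_n} -> bool) :
  (forall W, E1 W -> E2 W) -> binom_prob p E1 <= binom_prob p E2.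
Proof.
move=> E12; rewrite /binom_prob [X in _ <= X](bigID E1) /=.
rewrite [X in _ <= X + _](eq_bigl E1) => [|W]; last first.
  by case E1W: (E1 W); rewrite ?andbF ?andbT ?E12.
by rewrite lerDl sumr_ge0 // => W _; apply: binom_weight_ge0.
Qed.

Lemma binom_probU (E1 E2 : {set 'I_n} -> bool) :
  binom_prob p (fun W => E1 W || E2 W) <= binom_prob p E1 + binom_prob p E2.
Proof.
rewrite /binom_prob (big_mkcond (fun W => E1 W || E2 W)).
rewrite (big_mkcond E1) (big_mkcond E2) -big_split /=; apply: ler_sum => W _.
by case: (E1 W); case: (E2 W); rewrite /= ?addr0 ?add0r ?lerDl ?binom_weight_ge0.
Qed.

Lemma binom_prob_le_mean (E : {set 'I_n} -> bool) (f : {set 'I_n} -> R) :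
  (forall W, 0 <= f W) -> (forall W, E W -> 1 <= f W) ->
  binom_prob p E <= \sum_W binom_weight W * f W.
Proof.
move=> f_ge0 f_ge1; rewrite [X in _ <= X](bigID E) /=.
apply: ler_wpDr; first by apply: sumr_ge0 => W _; rewrite mulr_ge0 ?binom_weight_ge0.
by apply: ler_sum => W EW; rewrite ler_peMr ?binom_weight_ge0 ?f_ge1.
Qed.

Lemma binom_chernoff (A : {set 'I_n}) (c t : R) :
  binom_prob p (fun W => t <= c * #|A :&: W|%:R)
  <= expR (#|A|%:R * (p * (expR c - 1)) - t).
Proof.
pose f W := expR (c * #|A :&: W|%:R) * expR (- t).
apply: le_trans (@binom_prob_le_mean _ f _ _) _.
- by move=> W; rewrite mulr_ge0 ?expR_ge0.
- by move=> W ctW; rewrite /f -expRD -[leLHS]expR0 ler_expR subr_ge0.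
under eq_bigr do rewrite mulrA; rewrite -big_distrl /= binom_mgf expRD.
rewrite ler_wpM2r ?expR_ge0 // expRM_natl lerXn2r ?nnegrE ?expR_ge0 //.
  by rewrite addr_ge0 ?subr_ge0 ?mulr_ge0 ?expR_ge0.
by have := expR_ge1Dx (p * (expR c - 1)); lra.
Qed.

Lemma binom_upper_tail (A : {set 'I_n}) (u : R) : 0 <= u -> u <= 1/3 ->
  binom_prob p (fun W => (1 + 5/2 * u) * (p * #|A|%:R) <= #|A :&: W|%:R)
  <= expR (- (u ^+ 2 * (p * #|A|%:R))).
Proof.
move=> u_ge0 u_le; have mu_ge0 : 0 <= p * #|A|%:R by rewrite mulr_ge0.
pose t := u * ((1 + 5/2 * u) * (p * #|A|%:R)).
apply: le_trans (le_trans _ (binom_chernoff A u t)) _.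
  by apply: le_binom_prob => W; apply: ler_wpM2l.
rewrite /t ler_expR; have := ler_wpM2l mu_ge0 (expR_le_taylor2 u_ge0 u_le); lra.
Qed.

Lemma binom_lower_tail (A : {set 'I_n}) (u : R) : 0 <= u ->
  binom_prob p (fun W => #|A :&: W|%:R <= (1 - 7/4 * u) * (p * #|A|%:R))
  <= expR (- (u ^+ 2 * (p * #|A|%:R))).
Proof.
move=> u_ge0; have mu_ge0 : 0 <= p * #|A|%:R by rewrite mulr_ge0.
have c_ge0 : 0 <= 7/6 * u by lra.
pose t := - (7/6 * u) * ((1 - 7/4 * u) * (p * #|A|%:R)).
apply: le_trans (le_trans _ (binom_chernoff A (- (7/6 * u)) t)) _.
  by apply: le_binom_prob => W; rewrite /t !mulNr lerN2; apply: ler_wpM2l.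
rewrite /t ler_expR; have := ler_wpM2l mu_ge0 (expRN_le_taylor2 c_ge0); nra.
Qed.

Definition concentrated (u : R) (A W : {set 'I_n}) : bool :=
  (1 - 7/4 * u) * (p * #|A|%:R) < #|A :&: W|%:R < (1 + 5/2 * u) * (p * #|A|%:R).

Lemma binom_prob_not_concentrated (A : {set 'I_n}) (u m : R) :
  0 <= u -> u <= 1/3 -> m <= #|A|%:R ->
  binom_prob p (fun W => ~~ concentrated u A W) <= 2 * expR (- (u ^+ 2 * (p * m))).
Proof.
move=> u_ge0 u_le mA.
pose lower W := #|A :&: W|%:R <= (1 - 7/4 * u) * (p * #|A|%:R).
pose upper W := (1 + 5/2 * u) * (p * #|A|%:R) <= #|A :&: W|%:R.
apply: le_trans (@le_binom_prob _ (fun W => lower W || upper W) _) _.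
  by move=> W; rewrite negb_and -!leNgt.
apply: le_trans (binom_probU _ _) _.
have tail_le : expR (- (u ^+ 2 * (p * #|A|%:R))) <= expR (- (u ^+ 2 * (p * m))).
  by rewrite ler_expR lerN2 ler_wpM2l ?exprn_ge0 // ler_wpM2l.
have := binom_upper_tail A u_ge0 u_le; have := binom_lower_tail A u_ge0; lra.
Qed.

End RandomSubset.

Lemma ratio_inv_dev_of_window (R : realType) (p a x u : R) :
  0 < p -> 0 < a -> 0 <= u -> u <= 6/35 ->
  (1 - 7/4 * u) * (p * a) < x < (1 + 5/2 * u) * (p * a) ->
  0 < x /\ `|p / x - a^-1| < 5/2 * u / a.
Proof.
move=> p_gt0 a_gt0 u_ge0 u_le /andP[lo hi].
have mu_gt0 : 0 < p * a by rewrite mulr_gt0.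
have x_gt0 : 0 < x by nra.
split=> //.
have dev : `|p * a - x| < 5/2 * u * x.
  have lo' : (1 - 7/4 * u) * (p * a) * (1 + 5/2 * u) < x * (1 + 5/2 * u).
    by rewrite ltr_pM2r //; lra.
  have hi' : x * (1 - 5/2 * u) < (1 + 5/2 * u) * (p * a) * (1 - 5/2 * u).
    by rewrite ltr_pM2r //; lra.
  (* (1 - 7/4 u)(1 + 5/2 u) = 1 + 35/8 u (6/35 - u) *)
  have gap : 0 <= u * (6/35 - u) * (p * a) by rewrite !mulr_ge0 ?subr_ge0 // ltW.
  rewrite ltr_norml; apply/andP; split; nra.
have -> : p / x - a^-1 = (p * a - x) / (a * x) by field; rewrite !gt_eqF.
rewrite normrM normfV (gtr0_norm (mulr_gt0 a_gt0 x_gt0)) ltr_pdivrMr ?mulr_gt0 //.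
by rewrite (_ : 5/2 * u / a * (a * x) = 5/2 * u * x) //; field; rewrite gt_eqF.
Qed.

Lemma lemma12_event_of_concentrated (R : realType) n (p bound u : R) (m : nat)
    (S T W : {set 'I_n}) :
  0 < p -> 0 <= u -> u <= 6/35 -> (0 < m)%N -> (m <= #|S|)%N -> (m <= #|T|)%N ->
  5 * u / m%:R <= bound ->
  concentrated p u S W -> concentrated p u T W -> lemma12_event p bound S T W.
Proof.
move=> p_gt0 u_ge0 u_le m_gt0 mS mT bound_ge concS concT.
have dev (A : {set 'I_n}) : (m <= #|A|)%N -> concentrated p u A W ->
    0 < #|A :&: W|%:R :> R /\ `|p / #|A :&: W|%:R - #|A|%:R^-1| < 5/2 * u / m%:R.
  move=> mA concA; have A_gt0 : 0 < #|A|%:R :> R by rewrite ltr0n (leq_trans m_gt0).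
  have [-> devA] := ratio_inv_dev_of_window p_gt0 A_gt0 u_ge0 u_le concA; split=> //.
  apply: (lt_le_trans devA); rewrite ler_wpM2l ?lef_pV2 ?posrE ?ler_nat ?ltr0n //.
    lra.
  exact: leq_trans mA.
have [SW_gt0 devS] := dev S mS concS; have [TW_gt0 devT] := dev T mT concT.
rewrite /lemma12_event -!card_gt0 -!(ltr0n R) SW_gt0 TW_gt0 /=.
apply: lt_le_trans bound_ge; rewrite mulrDr opprD addrACA.
by apply: le_lt_trans (ler_normD _ _) _; lra.
Qed.

Lemma binom_prob_lemma12_event (R : realType) n (p bound u : R) (m : nat)
    (S T : {set 'I_n}) :
  0 < p -> p <= 1 -> 0 <= u -> u <= 6/35 ->
  (0 < m)%N -> (m <= #|S|)%N -> (m <= #|T|)%N -> 5 * u / m%:R <= bound ->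
  1 - 4 * expR (- (u ^+ 2 * (p * m%:R))) <= binom_prob p (lemma12_event p bound S T).
Proof.
move=> p_gt0 p_le1 u_ge0 u_le m_gt0 mS mT bound_ge.
have p_ge0 := ltW p_gt0; have u_le3 : u <= 1/3 by lra.
have not_conc (A : {set 'I_n}) : (m <= #|A|)%N ->
    binom_prob p (fun W => ~~ concentrated p u A W)
    <= 2 * expR (- (u ^+ 2 * (p * m%:R))).
  by move=> mA; apply: binom_prob_not_concentrated; rewrite ?ler_nat.
rewrite binom_probC lerD2l lerN2.
apply: le_trans (le_binom_prob p_ge0 p_le1
  (E2 := fun W => ~~ concentrated p u S W || ~~ concentrated p u T W) _) _.
  move=> W; apply: contraNT => /norP[/negbNE concS /negbNE concT].
  exact: lemma12_event_of_concentrated p_gt0 u_ge0 u_le m_gt0 mS mT bound_ge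
    concS concT.
apply: le_trans (binom_probU p_ge0 p_le1 _ _) _.
by have := not_conc S mS; have := not_conc T mT; lra.
Qed.

(* minn has no neutral element on nat, so nmin folds over a mere commutative
   semigroup law; registering it makes bigD1 available. *)
HB.instance Definition _ := SemiGroup.isComLaw.Build nat minn minnA minnC.

Lemma nmin_le_card n (Gamma : {set {set 'I_n}}) A :
  A \in Gamma -> (nmin Gamma <= #|A|)%N.
Proof. by move=> AG; rewrite /nmin (bigD1 A) //= geq_minl. Qed.

Lemma card_le_nmax n (Gamma : {set {set 'I_n}}) A :
  A \in Gamma -> (#|A| <= nmax Gamma)%N.
Proof. by move=> AG; rewrite /nmax (bigD1 A) //= leq_maxl. Qed.

Lemma nmin_gt0 n (Gamma : {set {set 'I_n}}) A :
  finset.set0 \notin Gamma -> A \in Gamma -> (0 < nmin Gamma)%N.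
Proof.
move=> set0_notin AG; have card_gt0 B : B \in Gamma -> (0 < #|B|)%N.
  by move=> BG; rewrite card_gt0; apply: contraNneq set0_notin => <-.
apply: (big_ind (leq 1)) => // [|a b]; last by rewrite leq_min => -> ->.
by rewrite -[n]card_ord (leq_trans (card_gt0 A AG)) ?max_card.
Qed.

Lemma scaled_sqrt_le (R : realType) (L q m : R) : 0 <= L -> 0 < q -> 0 < m ->
  5 * Num.sqrt (L / (q * m)) / m <= Num.sqrt (104 / 3 * (L / (q * m ^+ 3))).
Proof.
move=> L_ge0 q_gt0 m_gt0.
have Lqm_ge0 k : 0 <= L / (q * m ^+ k) by rewrite divr_ge0 // mulr_ge0 ?exprn_ge0 // ltW.
rewrite -[leLHS]ger0_norm ?divr_ge0 ?mulr_ge0 ?sqrtr_ge0 ?(ltW m_gt0) // -sqrtr_sqr.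
apply: ler_wsqrtr; rewrite expr_div_n exprMn sqr_sqrtr; last exact: (Lqm_ge0 1%N).
have -> : 5 ^+ 2 * (L / (q * m)) / m ^+ 2 = 25 * (L / (q * m ^+ 3)).
  by field; rewrite !gt_eqF.
by rewrite ler_wpM2r //; lra.
Qed.

Theorem lemma12 (R : realType) (n k : nat) (Gamma : {set {set 'I_n}})
  (p eps : R) (S T : {set 'I_n}) :
  finset.partition Gamma [set: 'I_n] -> #|Gamma| = k ->
  0 < p -> p <= 1 ->
  S \in Gamma -> T \in Gamma -> S != T ->
  0 < eps -> eps < 1 ->
  p * (nmin Gamma)%:R >=
    104 / 3 * ((nmax Gamma)%:R / (nmin Gamma)%:R) ^+ 2 * ln (6 / eps) ->
  binom_prob p
    (lemma12_event p
       (Num.sqrt (104 / 3 * (ln (6 / eps) / (p * (nmin Gamma)%:R ^+ 3))))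
       S T)
  >= 1 - eps.
Proof.
move=> /and3P[_ _ set0_notin] _ p_gt0 p_le1 SG TG _ eps_gt0 eps_lt1 sample_large.
have [mS mT] := (nmin_le_card SG, nmin_le_card TG).
have m_gt0 := nmin_gt0 set0_notin SG.
set m := nmin Gamma in mS mT m_gt0 sample_large *.
set L := ln (6 / eps) in sample_large *.
have L_gt0 : 0 < L by rewrite ln_gt0 // ltr_pdivlMr //; lra.
have mR_gt0 : 0 < m%:R :> R by rewrite ltr0n.
have pm_gt0 : 0 < p * m%:R by rewrite mulr_gt0.
have pm_ge : 104 / 3 * L <= p * m%:R.
  have Mm : 1 <= (nmax Gamma)%:R / m%:R :> R.
    by rewrite ler_pdivlMr // mul1r ler_nat (leq_trans mS (card_le_nmax SG)).
  apply: le_trans sample_large; rewrite ler_pM2r // ler_peMr ?exprn_ege1 //; lra.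
set u := Num.sqrt (L / (p * m%:R)).
have u2 : u ^+ 2 = L / (p * m%:R) by rewrite sqr_sqrtr // divr_ge0 ?ltW.
have u_ge0 : 0 <= u := sqrtr_ge0 _.
have u_le : u <= 6 / 35.
  have : u ^+ 2 <= 3 / 104 by rewrite u2 ler_pdivrMr //; lra.
  nra.
apply: le_trans (binom_prob_lemma12_event p_gt0 p_le1 u_ge0 u_le m_gt0 mS mT _).
  rewrite u2 divfK ?gt_eqF // expRN lnK ?invf_div ?posrE ?divr_gt0 //; lra.
exact: scaled_sqrt_le (ltW L_gt0) p_gt0 mR_gt0.
Qed.
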